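(* Let $X$ be a finite set with $|X|=n$ and let $\mathfrak{G}=\mathbf{G}_2(X)$ be the generalized Desargues configuration, with point set $\mathcal{P}_2(X)$ and lines the sets $\mathcal{P}_2(Z)$ for $3$-subsets $Z$ of $X$. For $H\subseteq\mathcal{P}_2(X)$ the following are equivalent: (a) $H$ is a hyperplane of $\mathfrak{G}$; (b) there is a nonempty proper subset $Z$ of $X$ such that $H=\mathcal{P}_2(Z)\cup\mathcal{P}_2(X\setminus Z)$. Consequently, the Veldkamp space of $\mathbf{G}_2(X)$ is the projective space $PG(n-2,2)$.
   Context: $\mathcal{P}_2(Y)$ is the set of $2$-subsets of $Y$. A subspace is a set of points containing every line meeting it in at least two points; a hyperplane is a proper subspace meeting every line. For distinct hyperplanes $H_1,H_2$ of a partial Steiner triple system with point set $S$, $H_1\pitchfork H_2:=S\setminus(H_1\triangle H_2)$; the Veldkamp space of the system is the incidence structure whose points are its hyperplanes and whose lines are the triples $\{H_1,H_2,H_1\pitchfork H_2\}$ for distinct hyperplanes $H_1,H_2$. $PG(d,2)$ denotes the $d$-dimensional projective space over the two-element field. *)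

From HB Require Import structures.
From mathcomp Require Import all_boot all_order all_algebra.
Set Implicit Arguments. Unset Strict Implicit. Unset Printing Implicit Defensive.
Import GRing.Theory.

Section G2.
Variable X : finType.

Definition P2 (Y : {set X}) : {set {set X}} :=
  [set A : {set X} | (A \subset Y) && (#|A| == 2)].

Definition G2pts : {set {set X}} := P2 setT.

Definition G2line (L : {set {set X}}) : Prop :=
  exists Z : {set X}, #|Z| = 3 /\ L = P2 Z.

Definition G2subspace (H : {set {set X}}) : Prop :=
  H \subset G2pts /\
  forall L, G2line L -> 2 <= #|L :&: H| -> L \subset H.

Definition G2hyperplane (H : {set {set X}}) : Prop :=
  G2subspace H /\ H != G2pts /\
  forall L, G2line L -> exists2 p, p \in L & p \in H.

Definition vtrans (H1 H2 : {set {set X}}) : {set {set X}} :=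
  G2pts :\: ((H1 :\: H2) :|: (H2 :\: H1)).

Definition veldkamp_line (L : {set {set {set X}}}) : Prop :=
  exists H1 H2, [/\ G2hyperplane H1, G2hyperplane H2, H1 != H2 &
                    L = [set H1; H2; vtrans H1 H2]].
End G2.

(* PG(d,2): points are the nonzero vectors of F_2^(d+1) (here 'rV_m, m=d+1),
   lines are the triples {u, v, u+v} with u, v distinct nonzero. *)
Definition PGline (m : nat) (L : {set 'rV['F_2]_m}) : Prop :=
  exists u v : 'rV['F_2]_m, [/\ u != 0%R, v != 0%R, u != v & L = [set u; v; (u + v)%R]].

(* The Veldkamp space of G_2(X) is isomorphic to PG(m-1,2): a bijection f
   from the hyperplanes onto the nonzero vectors of 'rV_m, such that a set
   of points is a Veldkamp line iff it consists of hyperplanes and its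
   image is a line of PG(m-1,2). *)
Definition veldkamp_iso_PG (X : finType) (m : nat)
    (f : {set {set X}} -> 'rV['F_2]_m) : Prop :=
  [/\ (forall H, G2hyperplane H -> f H != 0%R),
      (forall H1 H2, G2hyperplane H1 -> G2hyperplane H2 -> f H1 = f H2 -> H1 = H2),
      (forall v, v != 0%R -> exists2 H, G2hyperplane H & f H = v) &
      (forall L : {set {set {set X}}}, veldkamp_line L <->
         ((forall H, H \in L -> G2hyperplane H) /\ PGline (f @: L)))].

From HB Require Import structures.
From mathcomp Require Import all_boot all_order all_algebra.
From mathcomp Require Import zify.
Set Implicit Arguments. Unset Strict Implicit. Unset Printing Implicit Defensive.

(* Each line {xy, xz, yz} of G_2(X) meets a hyperplane H in one or three points,
   so for a fixed point a the membership of xy in H is decided by that of xa and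
   ya: H consists of the pairs not separated by the set Z of the x <> a with
   xa \notin H and its complement.  Conversely, two distinct pairs inside a
   3-set share a point, so such a set of pairs is a subspace, and any three
   points contain two on the same side.  Fixing a base point x0, the indicator
   vector of this Z on X \ {x0} identifies the hyperplanes with the nonzero
   vectors of F_2^(n-1), and the Z of H1 ⋔ H2 is the symmetric difference of
   those of H1 and H2, i.e. the vectors add. *)

Lemma imset_inj_eq (aT rT : finType) (P : aT -> Prop) (f : aT -> rT) (A B : {set aT}) :
    (forall x y, P x -> P y -> f x = f y -> x = y) ->
    (forall x, x \in A -> P x) -> (forall x, x \in B -> P x) ->
  f @: A = f @: B -> A = B.
Proof.
move=> f_inj.
suff sub (C D : {set aT}) : (forall x, x \in C -> P x) -> (forall x, x \in D -> P x) ->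
    f @: C = f @: D -> C \subset D.
  by move=> PA PB fAB; apply/eqP; rewrite eqEsubset !sub.
move=> PC PD fCD; apply/subsetP => x xC.
have /imsetP [y yD fxy] : f x \in f @: D by rewrite -fCD imset_f.
by rewrite (f_inj _ _ (PC _ xC) (PD _ yD) fxy).
Qed.

Section Hyperplanes.
Variable X : finType.
Implicit Types (x y z a b : X) (W Z p q : {set X}) (H : {set {set X}}).

Lemma pair_in_P2 W x y : x != y -> ([set x; y] \in P2 W) = (x \in W) && (y \in W).
Proof. by move=> xy; rewrite inE cards2 xy andbT subUset !sub1set. Qed.

Lemma G2ptsP p : reflect (exists x y, x != y /\ p = [set x; y]) (p \in G2pts X).
Proof. by rewrite inE subsetT; apply: cards2P. Qed.

Lemma pair_in_G2pts x y : x != y -> [set x; y] \in G2pts X.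
Proof. by move=> xy; apply/G2ptsP; exists x, y. Qed.

Lemma P2_sub_G2pts W : P2 W \subset G2pts X.
Proof. by apply/subsetP => p; rewrite !inE subsetT => /andP []. Qed.

Lemma eq_on_pairs (A B : {set {set X}}) : A \subset G2pts X -> B \subset G2pts X ->
  (forall x y, x != y -> ([set x; y] \in A) = ([set x; y] \in B)) -> A = B.
Proof.
move=> /subsetP sA /subsetP sB eqAB; apply/setP => p; apply/idP/idP => pAB.
  by have /G2ptsP [x [y [xy pE]]] := sA _ pAB; rewrite pE -eqAB // -pE.
by have /G2ptsP [x [y [xy pE]]] := sB _ pAB; rewrite pE eqAB // -pE.
Qed.

Lemma pair_neq x y z : y != x -> y != z -> [set x; y] != [set x; z].
Proof. by move=> yx yz; apply/eqP => /setP /(_ y); rewrite !inE eqxx (negbTE yx) (negbTE yz). Qed.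

Lemma card3P W : #|W| = 3 -> exists x y z, [/\ x != y, x != z, y != z & W = [set x; y; z]].
Proof.
move=> W3; have /card_gt0P [x xW] : 0 < #|W| by rewrite W3.
have /cards2P [y [z [yz Wx]]] : #|W :\ x| == 2.
  by move: (cardsD1 x W); rewrite W3 xW => -[->].
have /setD1P [yx _] : y \in W :\ x by rewrite Wx !inE eqxx.
have /setD1P [zx _] : z \in W :\ x by rewrite Wx !inE eqxx orbT.
exists x, y, z; split; [by rewrite eq_sym | by rewrite eq_sym | by [] |].
by rewrite -setUA -Wx setD1K.
Qed.

Lemma P2_triple x y z : x != y -> x != z -> y != z ->
  P2 [set x; y; z] = [set [set x; y]; [set x; z]; [set y; z]].
Proof.
move=> xy xz yz; apply/setP => p; rewrite !inE.
apply/idP/idP => [/andP [pW /cards2P [u [v [uv pE]]]]|].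
  move: pW uv; rewrite pE subUset !sub1set !inE.
  case/andP=> /orP [/orP [] | ] /eqP -> /orP [/orP [] | ] /eqP -> uv;
    first [by rewrite eqxx in uv | by rewrite eqxx ?orbT | by rewrite setUC eqxx ?orbT].
by case/orP=> [/orP [] | ] /eqP ->;
  rewrite cards2 ?xy ?xz ?yz subUset !sub1set !inE !eqxx ?orbT.
Qed.

Lemma cards3 x y z : x != y -> x != z -> y != z -> #|[set x; y; z]| = 3.
Proof. by move=> xy xz yz; rewrite setUC cardsU1 cards2 xy !inE negb_or ![z == _]eq_sym xz yz. Qed.

Lemma P2_card3_union W p q : #|W| = 3 -> p \in P2 W -> q \in P2 W -> p != q -> p :|: q = W.
Proof.
move=> W3; rewrite !inE => /andP [pW /eqP p2] /andP [qW /eqP q2] pq.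
have /subsetPn [r rq rp] : ~~ (q \subset p).
  by apply: contra pq => qp; rewrite eq_sym eqEcard qp p2 q2.
apply/eqP; rewrite eqEcard subUset pW qW W3.
apply: leq_trans (_ : #|r |: p| <= _); first by rewrite cardsU1 rp p2.
by apply: subset_leq_card; rewrite subUset sub1set !inE rq orbT subsetUl.
Qed.

Lemma P2_card3_meet W p q : #|W| = 3 -> p \in P2 W -> q \in P2 W -> p != q ->
  exists2 c, c \in p & c \in q.
Proof.
move=> W3 pW qW pq; have := cardsUI p q; rewrite (P2_card3_union W3 pW qW pq) W3.
move: pW qW; rewrite !inE => /andP [_ /eqP ->] /andP [_ /eqP ->].
move=> card_pq; have /card_gt0P [c] : 0 < #|p :&: q| by lia.
by rewrite inE => /andP [cp cq]; exists c.
Qed.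

Definition P2split Z : {set {set X}} := P2 Z :|: P2 (~: Z).

Lemma pair_in_P2split Z x y : x != y ->
  ([set x; y] \in P2split Z) = ((x \in Z) == (y \in Z)).
Proof. by move=> xy; rewrite inE !pair_in_P2 // !inE; case: (x \in Z); case: (y \in Z). Qed.

Lemma P2split_sub Z : P2split Z \subset G2pts X.
Proof. by rewrite subUset !P2_sub_G2pts. Qed.

Lemma P2splitP Z p : p \in G2pts X ->
  reflect {in p &, forall u v, (u \in Z) = (v \in Z)} (p \in P2split Z).
Proof.
move=> pG; apply: (iffP idP) => [pZ | constZ].
  case/G2ptsP: pG pZ => x [y [xy ->]]; rewrite pair_in_P2split // => /eqP Zxy u v.
  by rewrite !inE => /orP [] /eqP -> /orP [] /eqP ->; rewrite ?Zxy.
case/G2ptsP: pG constZ => x [y [xy ->]] constZ; rewrite pair_in_P2split //.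
by apply/eqP/constZ; rewrite !inE eqxx ?orbT.
Qed.

Lemma P2split_subspace Z : G2subspace (P2split Z).
Proof.
split; first exact: P2split_sub.
move=> _ [W [W3 ->]] /card_gt1P [p [q [+ + pq]]]; rewrite !in_setI.
move=> /andP [pW pZ] /andP [qW qZ].
have [c cp cq] := P2_card3_meet W3 pW qW pq.
have constW w : w \in W -> (w \in Z) = (c \in Z).
  rewrite -(P2_card3_union W3 pW qW pq) inE => /orP [wp | wq].
    exact: (P2splitP _ (subsetP (P2split_sub Z) _ pZ)).
  exact: (P2splitP _ (subsetP (P2split_sub Z) _ qZ)).
apply/subsetP => r rW; apply/P2splitP; first exact: subsetP (P2_sub_G2pts W) _ rW.
move: rW; rewrite inE => /andP [/subsetP rW _] u v ur vr.
by rewrite !constW ?rW.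
Qed.

Lemma P2split_meets_lines Z L : G2line L -> exists2 p, p \in L & p \in P2split Z.
Proof.
case=> W [/card3P [x [y [z [xy xz yz ->]]]] ->]; rewrite P2_triple //.
have : [|| (x \in Z) == (y \in Z), (x \in Z) == (z \in Z) | (y \in Z) == (z \in Z)].
  by case: (x \in Z); case: (y \in Z); case: (z \in Z).
case/or3P=> E; [exists [set x; y] | exists [set x; z] | exists [set y; z]];
  by rewrite ?pair_in_P2split // !inE eqxx ?orbT.
Qed.

Lemma P2split_hyperplane Z a b : a \in Z -> b \notin Z -> G2hyperplane (P2split Z).
Proof.
move=> aZ bZ; have ab : a != b by apply: contraNneq bZ => <-.
split; [exact: P2split_subspace | split; last exact: P2split_meets_lines].
apply/eqP => E; have := pair_in_G2pts ab.
by rewrite -E pair_in_P2split // aZ (negbTE bZ).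
Qed.

Lemma hyperplane_missing_pair H : G2hyperplane H ->
  exists a b, a != b /\ [set a; b] \notin H.
Proof.
case=> [[HG _] [HnG _]].
have /subsetPn [p /G2ptsP [a [b [ab ->]]] abH] : ~~ (G2pts X \subset H).
  by apply: contra HnG => GH; rewrite eqEsubset HG GH.
by exists a, b.
Qed.

Lemma hyperplane_pair_parity H x y z : G2hyperplane H -> x != y -> x != z -> y != z ->
  ([set x; y] \in H) = (([set x; z] \in H) == ([set y; z] \in H)).
Proof.
move=> [[_ subspH] [_ meetH]] xy xz yz.
have lineL : G2line (P2 [set x; y; z]) by exists [set x; y; z]; rewrite cards3.
have full_if_two p q : p \in P2 [set x; y; z] -> q \in P2 [set x; y; z] -> p != q ->
    p \in H -> q \in H -> P2 [set x; y; z] \subset H.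
  move=> pL qL pq pH qH; apply: subspH => //.
  by apply/card_gt1P; exists p, q; rewrite !in_setI pL qL pH qH.
have [p pL pH] := meetH _ lineL.
have Lxy : [set x; y] \in P2 [set x; y; z] by rewrite pair_in_P2 // !inE !eqxx ?orbT.
have Lxz : [set x; z] \in P2 [set x; y; z] by rewrite pair_in_P2 // !inE !eqxx ?orbT.
have Lyz : [set y; z] \in P2 [set x; y; z] by rewrite pair_in_P2 // !inE !eqxx ?orbT.
have xy_xz : [set x; y] != [set x; z] by rewrite pair_neq // eq_sym.
have xy_yz : [set x; y] != [set y; z] by rewrite [[set x; y]]setUC pair_neq.
have xz_yz : [set x; z] != [set y; z] by rewrite [[set x; z]]setUC [[set y; z]]setUC pair_neq.
move: pL pH; rewrite P2_triple // !inE.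
case h1: ([set x; y] \in H); case h2: ([set x; z] \in H); case h3: ([set y; z] \in H) => //=.
- by move/subsetP: (full_if_two _ _ Lxy Lxz xy_xz h1 h2) => /(_ _ Lyz); rewrite h3.
- by move/subsetP: (full_if_two _ _ Lxy Lyz xy_yz h1 h3) => /(_ _ Lxz); rewrite h2.
- by move/subsetP: (full_if_two _ _ Lxz Lyz xz_yz h2 h3) => /(_ _ Lxy); rewrite h1.
- by case/orP=> [/orP [] | ] /eqP ->; rewrite ?h1 ?h2 ?h3.
Qed.

Definition opp_side H a : {set X} := [set x | (x != a) && ([set a; x] \notin H)].

Lemma hyperplane_opp_side H a : G2hyperplane H -> H = P2split (opp_side H a).
Proof.
move=> hH; apply: eq_on_pairs; [by case: hH => [[]] | exact: P2split_sub |].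
move=> x y xy; rewrite pair_in_P2split // !inE.
have [xa | xa] := eqVneq x a; have [ya | ya] := eqVneq y a => /=.
- by rewrite xa ya eqxx in xy.
- by rewrite xa; case: (_ \in H).
- by rewrite ya setUC; case: (_ \in H).
rewrite (hyperplane_pair_parity hH xy xa ya) ![[set _; a]]setUC.
by case: ([set a; x] \in H); case: ([set a; y] \in H).
Qed.

Lemma in_opp_side_id H a : (a \in opp_side H a) = false.
Proof. by rewrite inE eqxx. Qed.

Lemma opp_side_P2split Z a : a \notin Z -> opp_side (P2split Z) a = Z.
Proof.
move=> aZ; apply/setP => x; rewrite inE.
have [-> | xa] := eqVneq x a; first by rewrite (negbTE aZ).
by rewrite pair_in_P2split 1?eq_sym // (negbTE aZ); case: (x \in Z).
Qed.

Lemma G2hyperplaneP H : G2hyperplane H <->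
  exists Z, [/\ Z != set0, Z != setT & H = P2 Z :|: P2 (~: Z)].
Proof.
split=> [hH | [Z [/set0Pn [a aZ] ZT ->]]].
  have [a [b [ab abH]]] := hyperplane_missing_pair hH.
  exists (opp_side H a); split; last exact: hyperplane_opp_side.
    by apply/set0Pn; exists b; rewrite inE eq_sym ab.
  by apply/eqP => /setP /(_ a); rewrite !inE eqxx.
have /subsetPn [b _ bZ] : ~~ (setT \subset Z) by rewrite subTset.
exact: P2split_hyperplane aZ bZ.
Qed.

Lemma eq_of_xor_set0 Z1 Z2 : [set x | (x \in Z1) (+) (x \in Z2)] = set0 -> Z1 = Z2.
Proof.
move/setP=> E; apply/setP => x; move: (E x); rewrite !inE.
by case: (x \in Z1); case: (x \in Z2).
Qed.

Lemma vtrans_P2split Z1 Z2 :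
  vtrans (P2split Z1) (P2split Z2) = P2split [set x | (x \in Z1) (+) (x \in Z2)].
Proof.
apply: eq_on_pairs; [exact: subsetDl | exact: P2split_sub |] => x y xy.
rewrite [in RHS]pair_in_P2split // /vtrans in_setD pair_in_G2pts // !in_setU !in_setD.
rewrite !pair_in_P2split // !inE.
by case: (x \in Z1); case: (y \in Z1); case: (x \in Z2); case: (y \in Z2).
Qed.

Lemma veldkamp_iso_PG_card0 :
  #|X| = 0 -> veldkamp_iso_PG (fun _ : {set {set X}} => 0%R : 'rV['F_2]_(#|X|.-1)).
Proof.
move=> X0; have no_hyp H : ~ G2hyperplane H.
  by case/hyperplane_missing_pair=> a _; move: (card0_eq X0 a); rewrite !inE.
have rV_eq0 (v : 'rV['F_2]_(#|X|.-1)) : v = 0%R.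
  by apply/rowP => i; exfalso; move: (nat_of_ord i) (ltn_ord i); rewrite X0.
split=> [H /no_hyp | H1 H2 /no_hyp | v | L] //; first by rewrite (rV_eq0 v) eqxx.
split=> [[H1 [H2 [/no_hyp]]] // | [_ [u [v [u0]]]]].
by rewrite (rV_eq0 u) eqxx in u0.
Qed.

Section Coordinates.
Variable x0 : X.
Local Open Scope ring_scope.

Definition coord_point (i : 'I_#|X|.-1) : X := enum_val (cast_ord (esym (cardsC1 x0)) i).

Lemma coord_point_neq i : coord_point i != x0.
Proof. by have := enum_valP (cast_ord (esym (cardsC1 x0)) i); rewrite !inE. Qed.

Lemma coord_point_inj : injective coord_point.
Proof. by move=> i j /enum_val_inj /cast_ord_inj. Qed.

Lemma coord_pointP y : y != x0 -> exists i, coord_point i = y.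
Proof.
move=> yx; have yA : y \in [set~ x0] by rewrite !inE.
exists (cast_ord (cardsC1 x0) (enum_rank_in yA y)).
by rewrite /coord_point cast_ordK enum_rankK_in.
Qed.

Lemma F2_natr_inj (a b : bool) : (a%:R : 'F_2) = b%:R -> a = b.
Proof. by case: a; case: b. Qed.

Lemma F2_natr_addb (a b : bool) : ((a (+) b)%:R : 'F_2) = a%:R + b%:R.
Proof. by case: a; case: b; rewrite ?addr0 ?add0r //; apply/val_inj. Qed.

Lemma F2_natr_eq1 (c : 'F_2) : (c == 1)%:R = c.
Proof. by case: c => [[|[|n]] ?]; apply/val_inj. Qed.

Definition side_vec Z : 'rV['F_2]_(#|X|.-1) := \row_i (coord_point i \in Z)%:R.

Definition hyperplane_vec H := side_vec (opp_side H x0).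

Lemma side_vec_inj Z1 Z2 :
  x0 \notin Z1 -> x0 \notin Z2 -> side_vec Z1 = side_vec Z2 -> Z1 = Z2.
Proof.
move=> x0Z1 x0Z2 /rowP E; apply/setP => y.
have [-> | /coord_pointP [i <-]] := eqVneq y x0; first by rewrite (negbTE x0Z1) (negbTE x0Z2).
by apply: F2_natr_inj; have := E i; rewrite !mxE.
Qed.

Lemma side_vec0 : side_vec set0 = 0.
Proof. by apply/rowP => i; rewrite !mxE inE. Qed.

Lemma side_vecD Z1 Z2 :
  side_vec [set x | (x \in Z1) (+) (x \in Z2)] = side_vec Z1 + side_vec Z2.
Proof. by apply/rowP => i; rewrite !mxE inE F2_natr_addb. Qed.

Lemma side_vec_surj (v : 'rV['F_2]_(#|X|.-1)) :
  exists2 Z : {set X}, x0 \notin Z & side_vec Z = v.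
Proof.
exists [set coord_point i | i in [pred i | v 0 i == 1]].
  by apply/imsetP => -[i _ /eqP]; rewrite eq_sym (negbTE (coord_point_neq i)).
by apply/rowP => i; rewrite mxE (mem_imset _ _ coord_point_inj) inE F2_natr_eq1.
Qed.

Lemma side_vec_hyperplane Z : x0 \notin Z -> Z != set0 -> G2hyperplane (P2split Z).
Proof. by move=> x0Z /set0Pn [a aZ]; apply: P2split_hyperplane aZ x0Z. Qed.

Lemma hyperplane_vec_P2split Z : x0 \notin Z -> hyperplane_vec (P2split Z) = side_vec Z.
Proof. by move=> x0Z; rewrite /hyperplane_vec opp_side_P2split. Qed.

Lemma hyperplane_vec_inj H1 H2 : G2hyperplane H1 -> G2hyperplane H2 ->
  hyperplane_vec H1 = hyperplane_vec H2 -> H1 = H2.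
Proof.
move=> hH1 hH2 /side_vec_inj E.
by rewrite (hyperplane_opp_side x0 hH1) (hyperplane_opp_side x0 hH2) E ?in_opp_side_id.
Qed.

Lemma hyperplane_vec_neq0 H : G2hyperplane H -> hyperplane_vec H != 0.
Proof.
move=> hH; apply/eqP; rewrite -side_vec0 => /side_vec_inj E.
have [_ [+ _]] := hH; rewrite (hyperplane_opp_side x0 hH) E ?in_opp_side_id ?inE //.
by rewrite /P2split setC0 (setUidPr (P2_sub_G2pts _)) eqxx.
Qed.

Lemma hyperplane_vec_surj v : v != 0 -> exists2 H, G2hyperplane H & hyperplane_vec H = v.
Proof.
move=> v0; have [Z x0Z ZE] := side_vec_surj v.
exists (P2split Z); last by rewrite hyperplane_vec_P2split.
apply: side_vec_hyperplane x0Z _; apply: contraNneq v0 => Z0.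
by rewrite -ZE Z0 side_vec0.
Qed.

Lemma vtrans_hyperplane_vec H1 H2 : G2hyperplane H1 -> G2hyperplane H2 -> H1 != H2 ->
  G2hyperplane (vtrans H1 H2) /\
  hyperplane_vec (vtrans H1 H2) = hyperplane_vec H1 + hyperplane_vec H2.
Proof.
move=> hH1 hH2 H12; set Z1 := opp_side H1 x0; set Z2 := opp_side H2 x0.
set Z := [set x | (x \in Z1) (+) (x \in Z2)].
have x0Z : x0 \notin Z by rewrite inE !in_opp_side_id.
have -> : vtrans H1 H2 = P2split Z.
  by rewrite {1}(hyperplane_opp_side x0 hH1) {1}(hyperplane_opp_side x0 hH2) vtrans_P2split.
split; last by rewrite hyperplane_vec_P2split // side_vecD.
apply: side_vec_hyperplane x0Z _; apply: contra_neq H12 => Z0.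
rewrite (hyperplane_opp_side x0 hH1) (hyperplane_opp_side x0 hH2) -/Z1 -/Z2.
by move/eq_of_xor_set0: Z0 ->.
Qed.

Lemma veldkamp_iso_PG_hyperplane_vec : veldkamp_iso_PG hyperplane_vec.
Proof.
split; [exact: hyperplane_vec_neq0 | exact: hyperplane_vec_inj | exact: hyperplane_vec_surj |].
have line_hyp H1 H2 : G2hyperplane H1 -> G2hyperplane H2 -> G2hyperplane (vtrans H1 H2) ->
    forall H, H \in [set H1; H2; vtrans H1 H2] -> G2hyperplane H.
  by move=> hH1 hH2 hH3 H; rewrite !inE => /orP [/orP [] | ] /eqP ->.
move=> L; split=> [[H1 [H2 [hH1 hH2 H12 ->]]] | [hL [u [v [u0 v0 uv fL]]]]].
  have [hH3 fH3] := vtrans_hyperplane_vec hH1 hH2 H12.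
  split; first exact: line_hyp.
  exists (hyperplane_vec H1), (hyperplane_vec H2).
  split; [exact: hyperplane_vec_neq0 | exact: hyperplane_vec_neq0 | |].
    by apply: contra_neq H12; apply: hyperplane_vec_inj.
  by rewrite !imsetU !imset_set1 fH3.
have /imsetP [H1 H1L u1] : u \in hyperplane_vec @: L by rewrite fL !inE eqxx.
have /imsetP [H2 H2L v2] : v \in hyperplane_vec @: L by rewrite fL !inE eqxx orbT.
have [hH1 hH2] := (hL _ H1L, hL _ H2L).
have H12 : H1 != H2 by apply: contra_neq uv => H12; rewrite u1 v2 H12.
have [hH3 fH3] := vtrans_hyperplane_vec hH1 hH2 H12.
exists H1, H2; split => //.
apply: (imset_inj_eq hyperplane_vec_inj hL (line_hyp _ _ hH1 hH2 hH3)).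
by rewrite fL !imsetU !imset_set1 fH3 u1 v2.
Qed.

End Coordinates.

End Hyperplanes.

Theorem theorem4p1 (X : finType) :
  (forall H : {set {set X}},
     G2hyperplane H <->
     exists Z : {set X}, [/\ Z != set0, Z != setT &
                             H = P2 Z :|: P2 (~: Z)]) /\
  exists f : {set {set X}} -> 'rV['F_2]_(#|X|.-1), veldkamp_iso_PG f.
Proof.
split; first exact: G2hyperplaneP.
have [x0 _ | X0] := pickP (fun _ : X => true).
  by exists (hyperplane_vec x0); apply: veldkamp_iso_PG_hyperplane_vec.
by eexists; apply: veldkamp_iso_PG_card0; apply: eq_card0.
Qed.
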